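(* Let $X$ be a Hausdorff hereditarily disconnected space. If $\mathcal{C}\subset\mathcal{K}(X)$ is a connected set with more than one point and $K\in\mathcal{C}$, then there is a closed subset $F\subset X$ with $K\subsetneq F$ such that the set $\mathcal{D}=\{K\cup\{x\}:x\in F\}$ is a connected subset of $\mathcal{K}(X)$ and $|\mathcal{D}|>1$.
   Context: $\mathcal{K}(X)$ is the set of nonempty compact subsets of $X$ with the Vietoris topology (generated by $U^+=\{A: A\subset U\}$ and $U^-=\{A: A\cap U\neq\emptyset\}$ for $U$ open in $X$). A space is hereditarily disconnected if every nonempty connected subset is a singleton. *)

From HB Require Import structures.
From mathcomp Require Import all_boot all_order all_algebra.
From mathcomp Require Import all_classical all_reals all_analysis.
Set Implicit Arguments. Unset Strict Implicit. Unset Printing Implicit Defensive.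
Local Open Scope classical_set_scope.

Definition hereditarily_disconnected (X : topologicalType) : Prop :=
  forall A : set X, A !=set0 -> connected A -> exists x : X, A = [set x].

Definition nonempty_compact (X : topologicalType) (A : set X) : Prop :=
  A !=set0 /\ compact A.

Definition hyperspace (X : topologicalType) : Type :=
  {A : set X | nonempty_compact A}.

Definition hval (X : topologicalType) (A : hyperspace X) : set X := proj1_sig A.

(* Vietoris subbasis: index (true, U) gives U^+ = {A | A ⊆ U},
   index (false, U) gives U^- = {A | A ∩ U ≠ ∅}, for U open in X. *)
Definition vietoris_subbase (X : topologicalType) (i : bool * set X)
  : set (hyperspace X) :=
  if i.1 then [set A | hval A `<=` i.2] else [set A | hval A `&` i.2 !=set0].

Section HyperspaceTopology.
Variable X : topologicalType.
HB.instance Definition _ := gen_eqMixin (hyperspace X).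
HB.instance Definition _ := gen_choiceMixin (hyperspace X).
HB.instance Definition _ := isSubBaseTopological.Build (hyperspace X)
  [set i : bool * set X | open i.2] (@vietoris_subbase X).
End HyperspaceTopology.

From HB Require Import structures.
From mathcomp Require Import all_boot all_order all_algebra.
From mathcomp Require Import all_classical all_reals all_analysis.
Set Implicit Arguments.
Unset Strict Implicit.
Unset Printing Implicit Defensive.
Local Open Scope classical_set_scope.

(* Some member of C leaves K.  Otherwise every member lies in K; since K is
   compact Hausdorff and hereditarily disconnected, its quasi-components are
   points, so a clopen piece U of K contains a point of one member A and misses
   another member B, and the Vietoris sets U^- and (K \ U)^+ disconnect C.
   Now let F be the closure of the union of C.  If a relatively clopen
   partition of F has K on one side, connectedness of C puts every member of
   C, hence all of F, on that side.  Thus F becomes connected once K is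
   collapsed to a point, and x |-> K u {x}, continuous and constant on K, maps
   F onto a connected set. *)

(* Relatively clopen partitions of A, presented by ambient open sets. *)
Definition open_split {T : topologicalType} (A U V : set T) :=
  [/\ open U, open V, A `<=` U `|` V & A `&` U `&` V = set0].

Section open_split.
Variable T : topologicalType.
Implicit Types A U V : set T.

Lemma open_split_disj A U V x : open_split A U V -> A x -> U x -> V x -> False.
Proof.
by case=> _ _ _ AUV0 Ax Ux Vx; have : (A `&` U `&` V) x by []; rewrite AUV0.
Qed.

Lemma open_splitC A U V : open_split A U V -> open_split A V U.
Proof.
case=> oU oV AUV AUV0; split; [by [] | by [] | by rewrite setUC |].
by rewrite -setIA setIC -setIA (setIC U) setIC.
Qed.

Lemma open_splitI A U V U' V' : open_split A U V -> open_split A U' V' ->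
  open_split A (U `&` U') (V `|` V').
Proof.
move=> sUV sUV'; have [oU oV AUV _] := sUV; have [oU' oV' AUV' _] := sUV'.
split; [exact: openI | exact: openU | |].
  move=> x Ax; case: (AUV x Ax) => [Ux|Vx]; last by right; left.
  by case: (AUV' x Ax) => [U'x|V'x]; [left|right; right].
apply/seteqP; split => // x [[Ax [Ux U'x]] [Vx|V'x]].
  exact: open_split_disj sUV Ax Ux Vx.
exact: open_split_disj sUV' Ax U'x V'x.
Qed.

Lemma open_split_preimage (S : topologicalType) (f : S -> T) (F : set S) U V :
  continuous f -> open_split (f @` F) U V ->
  open_split F (f @^-1` U) (f @^-1` V).
Proof.
move=> /continuousP fc sUV; have [oU oV FUV _] := sUV.
split; [exact: fc | exact: fc | by move=> x Fx; apply: FUV; exists x |].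
apply/seteqP; split => // x [[Fx Ufx] Vfx].
by apply: open_split_disj sUV _ Ufx Vfx; exists x.
Qed.

Lemma connected_open_splitP A :
  connected A <-> forall U V, open_split A U V -> A `<=` U \/ A `<=` V.
Proof.
split=> [cA U V sUV|cA B [b Bb] [G oG BG] [H cH BH]].
  have [oU oV AUV _] := sUV.
  have [[x [Ax Ux]]|AU0] := pselect (A `&` U !=set0); last first.
    by right => x Ax; case: (AUV x Ax) => // Ux; exfalso; apply: AU0; exists x.
  left; apply/setIidPl; apply: cA; [by exists x | by exists U |].
  exists (~` V); first exact: open_closedC.
  apply/seteqP; split => y [Ay Uy]; split => //.
    by move=> Vy; exact: open_split_disj sUV Ay Uy Vy.
  by case: (AUV y Ay).
have sGH : open_split A G (~` H).
  split; [by [] | exact: closed_openC | |].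
    move=> x Ax; have [Hx|] := pselect (H x); last by right.
    left; have : B x by rewrite BH.
    by rewrite BG => -[].
  apply/seteqP; split => // x [[Ax Gx] nHx]; apply: nHx.
  have : B x by rewrite BG.
  by rewrite BH => -[].
case: (cA _ _ sGH) => [AG|AH]; first by rewrite BG; exact: setIidl.
by move: Bb; rewrite BH => -[/AH].
Qed.

Lemma compact_directed_open_cover (Z : set T) (W : set (set T)) :
  compact Z -> (forall P, W P -> open P) -> W !=set0 ->
  (forall P P', W P -> W P' -> exists2 P'', W P'' & P `|` P' `<=` P'') ->
  Z `<=` \bigcup_(P in W) P -> exists2 P, W P & Z `<=` P.
Proof.
move=> cZ oW [P0 WP0] dirW ZW; apply: contrapT => noP.
have ZP P : W P -> Z `\` P !=set0.
  by move=> WP; apply: nonsubset => ZP; apply: noP; exists P.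
have FF : ProperFilter (filter_from W (fun P => Z `\` P)).
  apply: filter_from_proper; last by move=> P /ZP.
  apply: filter_from_filter; first by exists P0.
  move=> P P' WP WP'; have [P'' WP'' PP'] := dirW P P' WP WP'.
  exists P'' => // z [Zz nP'']; split; split => // Pz.
    by apply: nP''; apply: PP'; left.
  by apply: nP''; apply: PP'; right.
have [|y [Zy cly]] := cZ _ FF; first by exists P0 => // z [].
have [P WP Py] := ZW y Zy.
have [z [[_ nPz] Pz]] : ((Z `\` P) `&` P) !=set0.
  by apply: cly (open_nbhs_nbhs (conj (oW P WP) Py)); exists P.
exact: nPz.
Qed.

End open_split.

Lemma connected_image_open_split (S T : topologicalType) (f : S -> T)
    (F K : set S) :
  continuous f -> K `<=` F -> K !=set0 ->
  (forall x y, K x -> K y -> f x = f y) ->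
  (forall U V, open_split F U V -> K `<=` V -> F `<=` V) -> connected (f @` F).
Proof.
move=> fc KF [k Kk] fK FV; apply/connected_open_splitP => U V sUV.
have [_ _ fFUV _] := sUV.
have image_sub W : F `<=` f @^-1` W -> f @` F `<=` W.
  by move=> FW _ [x Fx <-]; exact: FW.
have fKk W : W (f k) -> K `<=` f @^-1` W.
  by move=> Wfk x Kx /=; rewrite (fK x k Kx Kk).
case: (fFUV (f k)); [by exists k; [exact: KF|] | move=> Ufk | move=> Vfk].
  left; apply: image_sub; apply: FV (fKk U Ufk).
  exact: open_splitC (open_split_preimage fc sUV).
right; apply: image_sub; apply: FV (fKk V Vfk).
exact: open_split_preimage fc sUV.
Qed.

Section separation.
Variable T : topologicalType.
Implicit Types A B U V : set T.

Lemma compact_separation A B : compact A ->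
  (forall a, A a ->
    exists U V, [/\ open U, open V, U a, B `<=` V & U `&` V = set0]) ->
  exists U V, [/\ open U, open V, A `<=` U, B `<=` V & U `&` V = set0].
Proof.
move=> cA sepA.
pose W := [set U | open U /\ exists V, [/\ open V, B `<=` V & U `&` V = set0]].
have [||||U [oU [V [oV BV UV0]]] AU] := @compact_directed_open_cover _ A W cA.
- by move=> U [].
- exists set0; split; first exact: open0.
  by exists setT; split => //; [exact: openT | rewrite set0I].
- move=> U U' [oU [V [oV BV UV0]]] [oU' [V' [oV' BV' UV0']]].
  exists (U `|` U') => //; split; first exact: openU.
  exists (V `&` V'); split; [exact: openI | by move=> b Bb; split; auto |].
  apply/seteqP; split => // z [[Uz|U'z] [Vz V'z]].
    by have : (U `&` V) z by []; rewrite UV0.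
  by have : (U' `&` V') z by []; rewrite UV0'.
- move=> a Aa; have [U [V [oU oV Ua BV UV0]]] := sepA a Aa.
  by exists U => //; split => //; exists V.
- by exists U, V.
Qed.

Hypothesis hT : hausdorff_space T.

Lemma hausdorff_point_compact_separation a B : compact B -> ~ B a ->
  exists U V, [/\ open U, open V, U a, B `<=` V & U `&` V = set0].
Proof.
move=> cB nBa.
have [|V [U [oV oU BV aU VU0]]] := @compact_separation B [set a] cB.
  move=> b Bb; have ab : a != b by apply/eqP => ab; apply: nBa; rewrite ab.
  move: hT; rewrite open_hausdorff => /(_ a b ab) [[U V] /=].
  move=> [Ua Vb] [oU oV /eqP UV0].
  move: Ua Vb; rewrite !inE => Ua Vb.
  by exists V, U; split => //; [move=> _ -> | rewrite setIC].
by exists U, V; split => //; [exact: aU | rewrite setIC].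
Qed.

Lemma hausdorff_compact_separation A B : compact A -> compact B ->
  A `&` B = set0 ->
  exists U V, [/\ open U, open V, A `<=` U, B `<=` V & U `&` V = set0].
Proof.
move=> cA cB AB0; apply: compact_separation => // a Aa.
apply: hausdorff_point_compact_separation => // Ba.
by have : (A `&` B) a by []; rewrite AB0.
Qed.

End separation.

Section quasi_component.
Variable T : topologicalType.
Implicit Types K L U V Z : set T.

Definition quasi_component K x :=
  [set y | K y /\ forall U V, open_split K U V -> U x -> U y].

Lemma quasi_component_refl K x : K x -> quasi_component K x x.
Proof. by []. Qed.

Lemma quasi_component_closed K x : closed K -> closed (quasi_component K x).
Proof.
move=> clK.
have -> : quasi_component K x =
    K `&` \bigcap_(P in [set P | open_split K P.1 P.2 /\ P.1 x]) ~` P.2.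
  apply/seteqP; split => y [Ky Qy]; split => //.
    move=> [U V] /= [sUV Ux] Vy.
    exact: open_split_disj sUV Ky (Qy U V sUV Ux) Vy.
  move=> U V sUV Ux; have [_ _ KUV _] := sUV.
  by case: (KUV y Ky) => // Vy; exfalso; exact: Qy (U, V) (conj sUV Ux) Vy.
apply: closedI => //; apply: closed_bigI => P [[_ oV _ _] _].
exact: open_closedC.
Qed.

Lemma open_split_off_quasi_component K x Z :
  compact K -> closed Z -> Z `<=` K -> Z `&` quasi_component K x = set0 ->
  exists U V, [/\ open_split K U V, U x & Z `<=` V].
Proof.
move=> cK clZ ZK ZQ0.
have [|||||V [U [sUV Ux]] ZV] :=
    @compact_directed_open_cover _ Z
      [set V | exists U, open_split K U V /\ U x].
- exact: subclosed_compact cK ZK.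
- by move=> V [U [[_ oV _ _] _]].
- exists set0, setT; split => //.
  by split; [exact: openT | exact: open0 | by left | rewrite setI0].
- move=> V V' [U [sUV Ux]] [U' [sUV' U'x]]; exists (V `|` V') => //.
  by exists (U `&` U'); split; [exact: open_splitI | split].
- move=> z Zz; apply: contrapT => noV.
  have : (Z `&` quasi_component K x) z; last by rewrite ZQ0.
  split => //; split => [|U V sUV Ux]; first exact: ZK.
  have [_ _ KUV _] := sUV; case: (KUV z (ZK z Zz)) => // Vz.
  by exfalso; apply: noV; exists V => //; exists U.
- by exists U, V.
Qed.

Hypothesis hT : hausdorff_space T.

Lemma quasi_component_sub_open K x U V : compact K -> K x ->
  open U -> open V -> U `&` V = set0 ->
  quasi_component K x `<=` U `|` V -> U x -> quasi_component K x `<=` U.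
Proof.
move=> cK Kx oU oV UV0 QUV Ux.
pose Z := K `&` ~` (U `|` V).
have clZ : closed Z.
  by apply: closedI; [exact: compact_closed | exact/open_closedC/openU].
have [|U' [V' [sUV' U'x ZV']]] :=
    open_split_off_quasi_component (x:=x) cK clZ (fun z h => h.1).
  by apply/seteqP; split => // z [[Kz nUVz] Qz]; exact: nUVz (QUV z Qz).
have sUV : open_split K (U' `&` U) (V' `|` V).
  have [oU' oV' KUV' _] := sUV'.
  split; [exact: openI | exact: openU | |].
  - move=> z Kz; case: (KUV' z Kz) => [U'z|V'z]; last by right; left.
    have [[Uz|Vz]|nUVz] := pselect ((U `|` V) z); [by left|by right; right|].
    by right; left; apply: ZV'.
  - apply/seteqP; split => // z [[Kz [U'z Uz]] [V'z|Vz]].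
      exact: open_split_disj sUV' Kz U'z V'z.
    by have : (U `&` V) z by []; rewrite UV0.
by move=> y [_ /(_ _ _ sUV) []].
Qed.

Lemma quasi_component_connected K x : compact K -> K x ->
  connected (quasi_component K x).
Proof.
move=> cK Kx; set Q := quasi_component K x.
have Qx : Q x := quasi_component_refl Kx.
have clQ : closed Q by exact/quasi_component_closed/(compact_closed hT).
have cQ : compact Q by apply: (subclosed_compact clQ cK) => y [].
have cQD W : open W -> compact (Q `&` ~` W).
  move=> oW; apply: (subclosed_compact _ cQ) => [|y []//].
  exact/(closedI clQ)/open_closedC.
apply/connected_open_splitP => U V sUV.
wlog Ux : U V sUV / U x.
  move=> gen; have [_ _ QUV _] := sUV.
  case: (QUV x Qx) => [Ux|Vx]; first exact: gen.
  by case: (gen V U (open_splitC sUV) Vx); [right|left].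
left; have [oU oV QUV _] := sUV.
have nVU y : Q y -> U y -> ~ V y by exact: open_split_disj sUV.
have nUV y : Q y -> V y -> ~ U y.
  by move=> Qy Vy Uy; exact: open_split_disj sUV Qy Uy Vy.
have [U' [V' [oU' oV' QUU' QVV' UV0']]] :
    exists U' V', [/\ open U', open V', Q `&` ~` V `<=` U', Q `&` ~` U `<=` V'
                  & U' `&` V' = set0].
  apply: hausdorff_compact_separation => //; [exact: cQD | exact: cQD |].
  by apply/seteqP; split => // y [[Qy nVy] [_ nUy]]; case: (QUV y Qy).
have QUV' : Q `<=` U' `|` V'.
  move=> y Qy; case: (QUV y Qy) => [Uy|Vy].
    by left; apply: QUU'; split => //; exact: nVU.
  by right; apply: QVV'; split => //; exact: nUV.
have QU' : Q `<=` U'.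
  apply: quasi_component_sub_open QUV' _ => //.
  by apply: QUU'; split => //; exact: nVU.
move=> y Qy; case: (QUV y Qy) => // Vy.
have : (U' `&` V') y.
  by split; [exact: QU' | apply: QVV'; split => //; exact: nUV].
by rewrite UV0'.
Qed.

Lemma hereditarily_disconnected_open_split K x L :
  hereditarily_disconnected T ->
  compact K -> K x -> closed L -> L `<=` K -> ~ L x ->
  exists U V, [/\ open_split K U V, U x & L `<=` V].
Proof.
move=> hd cK Kx clL LK nLx.
have Qx := quasi_component_refl Kx.
have [y Qy] := hd (quasi_component K x) (ex_intro _ x Qx)
  (quasi_component_connected cK Kx).
apply: open_split_off_quasi_component => //.
apply/seteqP; split => // z [Lz]; rewrite Qy => zy.
by move: Qx; rewrite Qy => xy; apply: nLx; rewrite xy -zy.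
Qed.

End quasi_component.

Section hyperspace.
Variable X : topologicalType.
Implicit Types (A K : hyperspace X) (U V S : set X).

Lemma hval_inj : injective (@hval X).
Proof.
by case=> a pa [b pb] /= ab; subst b; congr exist; exact: Prop_irrelevance.
Qed.

Lemma hval_compact A : compact (hval A). Proof. exact: (proj2_sig A).2. Qed.

Lemma hval_nonempty A : hval A !=set0. Proof. exact: (proj2_sig A).1. Qed.

Lemma open_vietoris_subbase b U : open U -> open (@vietoris_subbase X (b, U)).
Proof.
move=> oU; exists [set vietoris_subbase (b, U)]; last by rewrite bigcup_set1.
move=> _ ->.
exact: (@finI_from1 _ _ [set i : bool * set X | open i.2] _ (b, U)).
Qed.

Lemma open_hyper_sub U : open U -> open [set A | hval A `<=` U].
Proof. exact: (open_vietoris_subbase true). Qed.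

Lemma open_hyper_meet U : open U -> open [set A | hval A `&` U !=set0].
Proof. exact: (open_vietoris_subbase false). Qed.

Lemma hyperspace_continuous (T : topologicalType) (f : T -> hyperspace X) :
  (forall U, open U -> open (f @^-1` [set A | hval A `<=` U])) ->
  (forall U, open U -> open (f @^-1` [set A | hval A `&` U !=set0])) ->
  continuous f.
Proof.
move=> fsub fmeet; apply/continuousP => _ [W sW <-]; rewrite preimage_bigcup.
apply: bigcup_open => _ /sW [E sE <-].
rewrite preimage_bigcap bigcap_fset big_seq.
apply: big_ind; [exact: openT | exact: openI |].
by move=> [[] U] /sE; rewrite inE /= => oU; [exact: fsub | exact: fmeet].
Qed.

Lemma nonempty_compact_setU1 K x : nonempty_compact (hval K `|` [set x]).
Proof.
by split; [exists x; right | exact/compactU/compact_set1/hval_compact].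
Qed.

Definition hsetU1 K x : hyperspace X := exist _ _ (nonempty_compact_setU1 K x).

Lemma hsetU1_id K x : hval K x -> hsetU1 K x = K.
Proof. by move=> Kx; apply: hval_inj; apply/setUidPl => _ ->. Qed.

Lemma hsetU1_image K F :
  [set A | exists2 x, F x & hval A = hval K `|` [set x]] = hsetU1 K @` F.
Proof.
apply/seteqP; split => A [x Fx AKx]; exists x => //; last by rewrite -AKx.
exact: hval_inj.
Qed.

Lemma hsetU1_continuous K : continuous (hsetU1 K).
Proof.
apply: hyperspace_continuous => U oU; rewrite openE => x /=.
  move=> KxU; have Ux : U x by apply: KxU; right.
  apply: filterS (open_nbhs_nbhs (conj oU Ux)).
  by move=> y Uy z [Kz | ->]; [apply: KxU; left | exact: Uy].
move=> [z [Kxz Uz]].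
have [[k [Kk Uk]]|nKU] := pselect (hval K `&` U !=set0).
  by apply: nearW => y; exists k; split => //; left.
case: Kxz => [Kz|zx]; first by exfalso; apply: nKU; exists z.
rewrite zx in Uz; apply: filterS (open_nbhs_nbhs (conj oU Uz)) => y Uy.
by exists y; split => //; right.
Qed.

Lemma connected_hyperspace_split (C : set (hyperspace X)) S U V :
  connected C -> (forall A, C A -> hval A `<=` S) -> open_split S U V ->
  (forall A, C A -> hval A `&` U !=set0) \/ (forall A, C A -> hval A `<=` V).
Proof.
move=> cC CS sUV; have [oU oV SUV _] := sUV.
have sC : open_split C [set A | hval A `&` U !=set0] [set A | hval A `<=` V].
  split; [exact: open_hyper_meet | exact: open_hyper_sub | |].
    move=> A CA; have [AV|/nonsubset [a [Aa nVa]]] := pselect (hval A `<=` V).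
      by right.
    by left; exists a; split => //; case: (SUV a (CS A CA a Aa)).
  apply/seteqP; split => // A [[CA [a [Aa Ua]]] AV].
  exact: open_split_disj sUV (CS A CA a Aa) Ua (AV a Aa).
by case: ((connected_open_splitP C).1 cC _ _ sC) => CUV; [left|right] => A /CUV.
Qed.

Lemma closure_bigcup_hyperspace_open_split (C : set (hyperspace X)) K U V :
  let F := closure (\bigcup_(A in C) hval A) in
  connected C -> C K -> open_split F U V -> hval K `<=` V -> F `<=` V.
Proof.
move=> F cC CK sUV KV; have [oU _ FUV _] := sUV.
have CF A : C A -> hval A `<=` F.
  by move=> CA x Ax; apply: subset_closure; exists A.
case: (connected_hyperspace_split cC CF sUV) => [CU|CV].
  have [x [Kx Ux]] := CU K CK.
  by exfalso; exact: open_split_disj sUV (CF K CK x Kx) Ux (KV x Kx).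
have FnU : F `<=` ~` U.
  rewrite ((closure_id _).1 (open_closedC oU)); apply: closureS.
  move=> x [A CA Ax] Ux.
  exact: open_split_disj sUV (CF A CA x Ax) Ux (CV A CA x Ax).
by move=> x Fx; case: (FUV x Fx) => // Ux; exfalso; exact: FnU x Fx Ux.
Qed.

Lemma connected_hyperspace_not_subset (C : set (hyperspace X)) K :
  hausdorff_space X -> hereditarily_disconnected X -> connected C ->
  (exists A B, [/\ C A, C B & A <> B]) -> C K ->
  exists2 A, C A & ~ (hval A `<=` hval K).
Proof.
move=> hX hd cC [A [B [CA CB AB]]] CK; apply: contrapT => noA.
have CsubK D : C D -> hval D `<=` hval K.
  by move=> CD; apply: contrapT => DK; apply: noA; exists D.
wlog [a Aa nBa] : A B CA CB AB / exists2 a, hval A a & ~ hval B a.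
  move=> gen; have [|nBA] := pselect (exists2 a, hval A a & ~ hval B a).
    exact: gen.
  apply: (gen B A) => //; first by move/esym.
  apply: contrapT => nAB; apply: AB; apply: hval_inj; apply/seteqP.
  by split => x Hx; apply: contrapT => nx; [apply: nBA | apply: nAB]; exists x.
have clB : closed (hval B) by exact/(compact_closed hX)/hval_compact.
have [U [V [sUV Ua BV]]] := hereditarily_disconnected_open_split hX hd
  (hval_compact (A:=K)) (CsubK A CA a Aa) clB (CsubK B CB) nBa.
case: (connected_hyperspace_split cC CsubK sUV) => [CU|CV].
  have [b [Bb Ub]] := CU B CB.
  exact: open_split_disj sUV (CsubK B CB b Bb) Ub (BV b Bb).
exact: open_split_disj sUV (CsubK A CA a Aa) Ua (CV A CA a Aa).
Qed.

End hyperspace.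

Theorem proposition5p7 (X : topologicalType)
  (hX : hausdorff_space X) (hd : hereditarily_disconnected X)
  (C : set (hyperspace X)) (K : hyperspace X) :
  connected C -> (exists A B : hyperspace X, [/\ C A, C B & A <> B]) -> C K ->
  exists F : set X, [/\ closed F, hval K `<` F,
    connected [set A : hyperspace X | exists2 x, F x & hval A = hval K `|` [set x]]
    & exists A B : hyperspace X,
        [/\ (exists2 x, F x & hval A = hval K `|` [set x]),
            (exists2 x, F x & hval B = hval K `|` [set x]) & A <> B]].
Proof.
move=> cC twoC CK.
have [A CA /nonsubset [a [Aa nKa]]] :=
  connected_hyperspace_not_subset hX hd cC twoC CK.
pose F := closure (\bigcup_(A in C) hval A).
have CF B : C B -> hval B `<=` F.
  by move=> CB x Bx; apply: subset_closure; exists B.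
have [k Kk] := hval_nonempty K.
exists F; rewrite hsetU1_image; split.
- exact: closed_closure.
- by split; [exact: CF | move=> FK; exact: nKa (FK a (CF A CA a Aa))].
- apply: connected_image_open_split (hsetU1_continuous (K:=K)) (CF K CK)
    (ex_intro _ k Kk) _ _ => [x y Kx Ky | U V sUV KV].
    by rewrite !hsetU1_id.
  exact: closure_bigcup_hyperspace_open_split cC CK sUV KV.
- exists K, (hsetU1 K a); split; [| by exists a; [exact: CF A CA a Aa|] |].
    by exists k; [exact: CF K CK k Kk | apply/esym/setUidPl => _ ->].
  by move=> Ka; apply: nKa; rewrite Ka; right.
Qed.
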